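(* Let $X$ be a complete metric space, let $f:X\to\mathbb{R}\cup\{+\infty\}$ be a lower semicontinuous function, let $r_0>0$, $k>0$, and let $\varphi\in\mathcal{K}(0,r_0)$. The following assertions are equivalent: (i) the multivalued mapping $X\rightrightarrows\mathbb{R}$, $x\mapsto[(\varphi\circ f)(x),+\infty)$, is $k$-metrically regular on $[0<f<r_0]\times(0,\varphi(r_0))$; (ii) for all $r_1,r_2\in(0,r_0)$, $\operatorname{Dist}([f\le r_1],[f\le r_2])\le k\,|\varphi(r_1)-\varphi(r_2)|$; (iii) for all $x\in[0<f<r_0]$, $|\nabla(\varphi\circ f)|(x)\ge\frac1k$.
   Context: $\mathcal{K}(0,r_0)$ is the set of functions $\varphi\in C([0,r_0))\cap C^1(0,r_0)$ with $\varphi(0)=0$ and $\varphi'(r)>0$ for all $r\in(0,r_0)$; $\varphi(r_0)$ denotes $\lim_{r\uparrow r_0}\varphi(r)\in(0,+\infty]$. Notation: $[r_1<f<r_2]=\{x:r_1<f(x)<r_2\}$, $[f\le r]=\{x:f(x)\le r\}$. $\operatorname{dist}(x,S)=\inf_{y\in S}d(x,y)$; the Hausdorff distance is $\operatorname{Dist}(S_1,S_2)=\max\{\sup_{x\in S_1}\operatorname{dist}(x,S_2),\sup_{x\in S_2}\operatorname{dist}(x,S_1)\}$ (possibly $+\infty$). A multivalued map $F:X\rightrightarrows Y$ is $k$-metrically regular at $(\bar x,\bar y)\in\operatorname{Graph}F$ if there exist $\varepsilon,\delta>0$ with $\operatorname{dist}(x,F^{-1}(y))\le k\operatorname{dist}(y,F(x))$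 for all $(x,y)\in B(\bar x,\varepsilon)\times B(\bar y,\delta)$, where $F^{-1}(y)=\{x:y\in F(x)\}$; it is $k$-metrically regular on $V$ if it is so at every point of $\operatorname{Graph}F\cap V$. Strong slope: $|\nabla g|(x)=\limsup_{y\to x}\frac{(g(x)-g(y))^+}{d(x,y)}$, $a^+=\max\{a,0\}$. *)

From Stdlib Require Import Reals.
From Coquelicot Require Export Coquelicot.
Open Scope R_scope.

Section Defs.
Variable X : Type.
Variable d : X -> X -> R.

Definition is_metric : Prop :=
  (forall x y, 0 <= d x y) /\
  (forall x y, d x y = 0 <-> x = y) /\
  (forall x y, d x y = d y x) /\
  (forall x y z, d x z <= d x y + d y z).

Definition complete_metric : Prop :=
  forall u : nat -> X,
    (forall eps, 0 < eps -> exists N, forall m n, (N <= m)%nat -> (N <= n)%nat ->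
        d (u m) (u n) < eps) ->
    exists l, forall eps, 0 < eps -> exists N, forall n, (N <= n)%nat -> d (u n) l < eps.

Definition no_minus_infty (f : X -> Rbar) : Prop := forall x, f x <> m_infty.

Definition lsc (f : X -> Rbar) : Prop :=
  forall x (a : R), Rbar_lt a (f x) ->
    exists delta, 0 < delta /\ forall y, d x y < delta -> Rbar_lt a (f y).

(* dist(x,S) = inf_{z in S} d(x,z)  (= +oo if S is empty) *)
Definition distX (x : X) (S : X -> Prop) : Rbar :=
  Rbar_glb (fun t => exists z, S z /\ t = Finite (d x z)).

(* Hausdorff distance Dist(S1,S2) = max of the two sups (possibly +oo) *)
Definition HausDist (S1 S2 : X -> Prop) : Rbar :=
  Rbar_lub (fun s =>
    s = Rbar_lub (fun t => exists x, S1 x /\ t = distX x S2) \/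
    s = Rbar_lub (fun t => exists x, S2 x /\ t = distX x S1)).

(* (a - b)^+ for a, b in R U {+oo, -oo} (the case oo - oo never matters) *)
Definition Rbar_pos_diff (a b : Rbar) : Rbar :=
  match a, b with
  | Finite a, Finite b => Finite (Rmax 0 (a - b))
  | Finite _, p_infty => Finite 0
  | Finite _, m_infty => p_infty
  | p_infty, Finite _ => p_infty
  | p_infty, m_infty => p_infty
  | p_infty, p_infty => Finite 0
  | m_infty, _ => Finite 0
  end.

(* strong slope |grad g|(x) = limsup_{y -> x} (g x - g y)^+ / d(x,y)
   = inf_{delta>0} sup_{0 < d(x,y) < delta} ...   (= 0 at isolated points) *)
Definition strong_slope (g : X -> Rbar) (x : X) : Rbar :=
  Rbar_glb (fun s => exists delta, 0 < delta /\
    s = Rbar_lub (fun t => t = Finite 0 \/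
          exists y, 0 < d x y < delta /\
                    t = Rbar_mult (Rbar_pos_diff (g x) (g y)) (Finite (/ d x y)))).

Definition distR (y : R) (A : R -> Prop) : Rbar :=
  Rbar_glb (fun t => exists z, A z /\ t = Finite (Rabs (y - z))).

(* multivalued map F : X ⇉ R, given as F x y <-> y ∈ F(x) *)
Definition metric_regular_at (F : X -> R -> Prop) (k : R) (xb : X) (yb : R) : Prop :=
  exists eps delta, 0 < eps /\ 0 < delta /\
    forall x y, d x xb < eps -> Rabs (y - yb) < delta ->
      Rbar_le (distX x (fun z => F z y)) (Rbar_mult (Finite k) (distR y (F x))).

Definition metric_regular_on (F : X -> R -> Prop) (k : R) (V : X -> R -> Prop) : Prop :=
  forall x y, F x y -> V x y -> metric_regular_at F k x y.

End Defs.

Definition in_K (r0 : R) (phi : R -> R) : Prop :=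
  (forall t, 0 <= t < r0 -> forall eps, 0 < eps -> exists delta, 0 < delta /\
      forall s, 0 <= s < r0 -> Rabs (s - t) < delta -> Rabs (phi s - phi t) < eps) /\
  (exists phi' : R -> R,
      (forall t, 0 < t < r0 -> is_derive phi t (phi' t)) /\
      (forall t, 0 < t < r0 -> continuous phi' t) /\
      (forall t, 0 < t < r0 -> 0 < phi' t)) /\
  phi 0 = 0.

(* phi(r0) := lim_{r -> r0^-} phi r, in (0,+oo] *)
Definition left_limit_at (phi : R -> R) (r0 : R) (L : Rbar) : Prop :=
  filterlim phi (at_left r0) (Rbar_locally L).

(* phi ∘ f, with the conventions: phi ∘ f = +oo where f >= r0 (incl. f = +oo),
   and phi ∘ f = f where f < 0 (any value <= 0 gives the same theorem). *)
Definition phi_comp {X : Type} (phi : R -> R) (r0 : R) (f : X -> Rbar) (x : X) : Rbar :=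
  match f x with
  | Finite t => if Rlt_dec t 0 then Finite t
                else if Rlt_dec t r0 then Finite (phi t) else p_infty
  | p_infty => p_infty
  | m_infty => m_infty
  end.

Definition epi_map {X : Type} (phi : R -> R) (r0 : R) (f : X -> Rbar) : X -> R -> Prop :=
  fun x y => Rbar_le (phi_comp phi r0 f x) (Finite y).

Definition sublevel {X : Type} (f : X -> Rbar) (r : R) : X -> Prop :=
  fun x => Rbar_le (f x) (Finite r).

From Stdlib Require Import Reals Lra Lia Classical ClassicalEpsilon.
From Coquelicot Require Import Coquelicot.
Open Scope R_scope.

(* Under (iii), Ekeland's variational principle applied to phi o f, truncated to a
   window [a, c], gives an error bound: from a point where phi o f = c one reaches
   [phi o f <= a] within distance k (c - a) + e, since at an Ekeland point strictly
   above a the slope bound would produce a strictly better point.  The error bound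
   yields both the Hausdorff estimate (ii) and the metric regularity (i).
   Conversely, (i) and (ii) each provide, next to any x with 0 < f x < r0, points
   where phi o f has dropped by D at distance less than k D + e, for arbitrarily
   small D; this forces the strong slope at x to be at least 1/k. *)

Lemma Rbar_le_lub (E : Rbar -> Prop) x : E x -> Rbar_le x (Rbar_lub E).
Proof. unfold Rbar_lub; destruct (Rbar_ex_lub E) as [l Hl]; apply Hl. Qed.

Lemma Rbar_lub_le (E : Rbar -> Prop) b :
  (forall x, E x -> Rbar_le x b) -> Rbar_le (Rbar_lub E) b.
Proof. unfold Rbar_lub; destruct (Rbar_ex_lub E) as [l Hl]; apply Hl. Qed.

Lemma Rbar_glb_le (E : Rbar -> Prop) x : E x -> Rbar_le (Rbar_glb E) x.
Proof. unfold Rbar_glb; destruct (Rbar_ex_glb E) as [l Hl]; apply Hl. Qed.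

Lemma Rbar_le_glb (E : Rbar -> Prop) b :
  (forall x, E x -> Rbar_le b x) -> Rbar_le b (Rbar_glb E).
Proof. unfold Rbar_glb; destruct (Rbar_ex_glb E) as [l Hl]; apply Hl. Qed.

Lemma Rbar_lt_lub (E : Rbar -> Prop) b :
  Rbar_lt b (Rbar_lub E) -> exists x, E x /\ Rbar_lt b x.
Proof.
  intros H; apply NNPP; intros Hn; apply (Rbar_lt_not_le _ _ H).
  apply Rbar_lub_le; intros x Ex; apply Rbar_not_lt_le; intros Hx.
  apply Hn; exists x; auto.
Qed.

Lemma Rbar_glb_lt (E : Rbar -> Prop) b :
  Rbar_lt (Rbar_glb E) b -> exists x, E x /\ Rbar_lt x b.
Proof.
  intros H; apply NNPP; intros Hn; apply (Rbar_lt_not_le _ _ H).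
  apply Rbar_le_glb; intros x Ex; apply Rbar_not_lt_le; intros Hx.
  apply Hn; exists x; auto.
Qed.

Lemma Rbar_le_lub_approx (E : Rbar -> Prop) (b : R) :
  (forall m, m < b -> exists x, E x /\ Rbar_le (Finite m) x) ->
  Rbar_le (Finite b) (Rbar_lub E).
Proof.
  intros H; apply Rbar_not_lt_le; intros Hlt.
  assert (Hm : exists m, m < b /\ Rbar_lt (Rbar_lub E) (Finite m)).
  { destruct (Rbar_lub E) as [L| |]; simpl in Hlt; try contradiction.
    - exists ((L + b) / 2); simpl; split; lra.
    - exists (b - 1); simpl; split; [lra | exact I]. }
  destruct Hm as [m [Hmb HmL]]; destruct (H m Hmb) as [x [Ex Hx]].
  apply (Rbar_lt_not_le _ _ HmL), (Rbar_le_trans _ _ _ Hx), Rbar_le_lub, Ex.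
Qed.

Lemma Rbar_mult_pos_p_infty (k : R) : 0 < k -> Rbar_mult (Finite k) p_infty = p_infty.
Proof.
  intros Hk; unfold Rbar_mult; simpl; destruct (Rle_dec 0 k); [|lra].
  destruct (Rle_lt_or_eq_dec 0 k r); [reflexivity | lra].
Qed.

Lemma Rbar_mult_le_compat_l (k : R) (A B : Rbar) :
  0 < k -> Rbar_le A B -> Rbar_le (Rbar_mult (Finite k) A) (Rbar_mult (Finite k) B).
Proof.
  intros Hk HAB.
  assert (Hm : Rbar_mult (Finite k) m_infty = m_infty).
  { unfold Rbar_mult; simpl; destruct (Rle_dec 0 k); [|lra].
    destruct (Rle_lt_or_eq_dec 0 k r); [reflexivity | lra]. }
  destruct A as [a| |], B as [b| |]; simpl in HAB; try contradiction;
    rewrite ?Hm, ?Rbar_mult_pos_p_infty by exact Hk; simpl; auto.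
  apply Rmult_le_compat_l; lra.
Qed.

Section Metric.
Variables (X : Type) (d : X -> X -> R).
Hypothesis Hmet : is_metric X d.

Lemma dist_nonneg x y : 0 <= d x y.
Proof. apply (proj1 Hmet). Qed.

Lemma dist_refl x : d x x = 0.
Proof. apply (proj1 (proj2 Hmet)); reflexivity. Qed.

Lemma dist_sym x y : d x y = d y x.
Proof. apply (proj1 (proj2 (proj2 Hmet))). Qed.

Lemma dist_triangle x y z : d x z <= d x y + d y z.
Proof. apply (proj2 (proj2 (proj2 Hmet))). Qed.

Lemma dist_pos x y : x <> y -> 0 < d x y.
Proof.
  intros Hxy; destruct (dist_nonneg x y) as [H | H]; auto.
  exfalso; apply Hxy, (proj1 (proj2 Hmet)); auto.
Qed.

Lemma dist_scaled_le0 s x y : 0 < s -> s * d x y <= 0 -> x = y.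
Proof.
  intros Hs H; apply NNPP; intros Hxy.
  pose proof (Rmult_lt_0_compat _ _ Hs (dist_pos x y Hxy)); lra.
Qed.

Lemma distX_le_approx x S (b : R) :
  (forall e, 0 < e -> exists z, S z /\ d x z <= b + e) -> Rbar_le (distX X d x S) (Finite b).
Proof.
  intros H; apply Rbar_not_lt_le; intros Hlt.
  assert (He : exists e, 0 < e /\ Rbar_lt (Finite (b + e)) (distX X d x S)).
  { destruct (distX X d x S) as [D| |]; simpl in Hlt; try contradiction.
    - exists ((D - b) / 2); simpl; split; lra.
    - exists 1; simpl; split; [lra | exact I]. }
  destruct He as [e [He Hlt']]; destruct (H e He) as [z [Sz Hz]].
  apply (Rbar_lt_not_le _ _ Hlt'), (Rbar_le_trans _ (Finite (d x z))).
  - apply Rbar_glb_le; exists z; auto.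
  - exact Hz.
Qed.

Lemma distX_lt x S (b : R) :
  Rbar_lt (distX X d x S) (Finite b) -> exists z, S z /\ d x z < b.
Proof. intros H; destruct (Rbar_glb_lt _ _ H) as [t [[z [Sz ->]] Hz]]; exists z; auto. Qed.

Lemma distX_mem x (S : X -> Prop) : S x -> Rbar_le (distX X d x S) (Finite 0).
Proof.
  intros Sx; apply distX_le_approx; intros e He; exists x; rewrite dist_refl; split; auto; lra.
Qed.

Lemma distX_subset x (S1 S2 : X -> Prop) :
  (forall z, S1 z -> S2 z) -> Rbar_le (distX X d x S2) (distX X d x S1).
Proof. intros H; apply Rbar_glb_subset; intros t [z [Sz ->]]; exists z; auto. Qed.

Lemma distX_le_HausDist S1 S2 x : S1 x -> Rbar_le (distX X d x S2) (HausDist X d S1 S2).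
Proof.
  intros Sx; apply (Rbar_le_trans _ (Rbar_lub (fun t => exists x, S1 x /\ t = distX X d x S2))).
  - apply Rbar_le_lub; exists x; auto.
  - apply Rbar_le_lub; left; reflexivity.
Qed.

Lemma strong_slope_ge_of_descent (g : X -> Rbar) x (c k : R) :
  0 < k -> g x = Finite c -> (forall y, g y <> m_infty) ->
  (forall eta, 0 < eta -> exists D, 0 < D < eta /\ forall e, 0 < e ->
     exists z, Rbar_le (g z) (Finite (c - D)) /\ d x z < k * D + e) ->
  Rbar_le (Finite (/ k)) (strong_slope X d g x).
Proof.
  intros Hk Hgx Hg Hdesc; apply Rbar_le_glb; intros t [delta [Hdelta ->]].
  apply Rbar_le_lub_approx; intros m Hm.
  destruct (Rle_or_lt m 0) as [Hm0 | Hm0].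
  { exists (Finite 0); split; [left; reflexivity | exact Hm0]. }
  assert (Hmk : k < / m).
  { rewrite <- (Rinv_inv k); apply Rinv_lt_contravar; auto.
    apply Rmult_lt_0_compat; auto; apply Rinv_0_lt_compat; lra. }
  destruct (Hdesc (delta * m)) as [D [HD Hz]]; [apply Rmult_lt_0_compat; lra|].
  destruct (Hz (D * (/ m - k))) as [z [Hgz Hdz]]; [apply Rmult_lt_0_compat; lra|].
  assert (Hdz' : m * d x z < D).
  { apply (Rmult_lt_compat_l m) in Hdz; auto.
    replace (m * (k * D + D * (/ m - k))) with D in Hdz by (field; lra); exact Hdz. }
  pose proof (Hg z) as Hgz'.
  destruct (g z) as [u| |] eqn:Hu; simpl in Hgz; try contradiction.
  assert (Hxz : 0 < d x z).
  { apply dist_pos; intros <-; rewrite Hgx in Hu; injection Hu; lra. }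
  exists (Rbar_mult (Rbar_pos_diff (g x) (g z)) (Finite (/ d x z))); split.
  - right; exists z; split; auto; split; auto.
    apply (Rmult_lt_reg_l m); auto; lra.
  - rewrite Hgx, Hu; simpl.
    apply (Rmult_le_reg_r (d x z)); auto.
    rewrite Rmult_assoc, Rinv_l, Rmult_1_r by lra.
    pose proof (Rmax_r 0 (c - u)); lra.
Qed.

End Metric.

Lemma inv_INR_S_pos n : 0 < / INR (S n).
Proof. apply Rinv_0_lt_compat, lt_0_INR; lia. Qed.

Lemma inv_INR_S_small eps : 0 < eps -> exists N, / INR (S N) < eps.
Proof.
  intros Heps; destruct (archimed_cor1 eps Heps) as [N [HN HN0]]; exists N.
  apply (Rle_lt_trans _ (/ INR N)); auto.
  apply Rinv_le_contravar; [apply lt_0_INR; lia | rewrite S_INR; lra].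
Qed.

Section Ekeland.
Variables (X : Type) (d : X -> X -> R).
Hypothesis Hmet : is_metric X d.
Hypothesis Hcomp : complete_metric X d.
Variables (G : X -> R) (m s : R).
Hypothesis G_ge : forall x, m <= G x.
Hypothesis G_lsc : forall x b, b < G x ->
  exists delta, 0 < delta /\ forall y, d x y < delta -> b < G y.
Hypothesis s_pos : 0 < s.

Definition descends (u y : X) : Prop := G y + s * d u y <= G u.

Lemma descends_refl u : descends u u.
Proof. unfold descends; rewrite (dist_refl X d Hmet); lra. Qed.

Lemma descends_trans u v y : descends u v -> descends v y -> descends u y.
Proof.
  unfold descends; intros Huv Hvy.
  pose proof (Rmult_le_compat_l s _ _ (Rlt_le _ _ s_pos) (dist_triangle X d Hmet u v y)); lra.
Qed.

Lemma descends_le u y : descends u y -> G y <= G u.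
Proof.
  unfold descends; intros H.
  pose proof (Rmult_le_pos _ _ (Rlt_le _ _ s_pos) (dist_nonneg X d Hmet u y)); lra.
Qed.

Lemma descends_near_inf u eta : 0 < eta ->
  exists v, descends u v /\ forall y, descends u y -> G v <= G y + eta.
Proof.
  intros Heta.
  set (E := fun t => exists y, descends u y /\ t = Finite (G y)).
  assert (Hlow : Rbar_le (Finite m) (Rbar_glb E)).
  { apply Rbar_le_glb; intros t [y [_ ->]]; apply G_ge. }
  assert (Hup : Rbar_le (Rbar_glb E) (Finite (G u))).
  { apply Rbar_glb_le; exists u; split; [apply descends_refl | reflexivity]. }
  assert (Hinf : forall y, descends u y -> Rbar_le (Rbar_glb E) (Finite (G y))).
  { intros y Hy; apply Rbar_glb_le; exists y; auto. }
  destruct (Rbar_glb E) as [I| |] eqn:HI; simpl in Hlow, Hup; try contradiction.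
  destruct (Rbar_glb_lt E (I + eta)) as [t [[v [Hv ->]] Hlt]]; [rewrite HI; simpl; lra|].
  exists v; split; auto; intros y Hy; specialize (Hinf y Hy); simpl in *; lra.
Qed.

Definition descent_step (n : nat) (u : X) : X :=
  proj1_sig (constructive_indefinite_description _
    (descends_near_inf u (/ INR (S n)) (inv_INR_S_pos n))).

Lemma descent_step_spec n u : descends u (descent_step n u) /\
  forall y, descends u y -> G (descent_step n u) <= G y + / INR (S n).
Proof. unfold descent_step; destruct (constructive_indefinite_description _ _); auto. Qed.

Variable x0 : X.

Fixpoint descent_seq (n : nat) : X :=
  match n with O => x0 | S n => descent_step n (descent_seq n) end.

Lemma descent_seq_descends n p : (n <= p)%nat -> descends (descent_seq n) (descent_seq p).
Proof.
  induction 1; [apply descends_refl|].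
  apply (descends_trans _ _ _ IHle), descent_step_spec.
Qed.

Lemma descent_seq_tail n y :
  descends (descent_seq (S n)) y -> s * d (descent_seq (S n)) y <= / INR (S n).
Proof.
  intros Hy; cbn [descent_seq] in *.
  assert (Hy0 : descends (descent_seq n) y).
  { apply (descends_trans _ _ _ (proj1 (descent_step_spec n _)) Hy). }
  pose proof (proj2 (descent_step_spec n _) y Hy0); unfold descends in Hy; lra.
Qed.

Lemma descent_seq_cauchy eps : 0 < eps -> exists N, forall p q, (N <= p)%nat -> (N <= q)%nat ->
  d (descent_seq p) (descent_seq q) < eps.
Proof.
  intros Heps; destruct (inv_INR_S_small (s * eps / 2)) as [N HN].
  { apply Rmult_lt_0_compat; [apply Rmult_lt_0_compat|]; lra. }
  exists (S N); intros p q Hp Hq.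
  pose proof (descent_seq_tail N _ (descent_seq_descends _ _ Hp)) as Hdp.
  pose proof (descent_seq_tail N _ (descent_seq_descends _ _ Hq)) as Hdq.
  pose proof (dist_triangle X d Hmet (descent_seq p) (descent_seq (S N)) (descent_seq q)) as Ht.
  rewrite (dist_sym X d Hmet (descent_seq p) (descent_seq (S N))) in Ht.
  apply (Rmult_lt_reg_l s); auto.
  pose proof (Rmult_le_compat_l s _ _ (Rlt_le _ _ s_pos) Ht); lra.
Qed.

(* The sets [descends u] are closed, by lower semicontinuity of [G]. *)
Lemma descent_seq_limit l :
  (forall eps, 0 < eps -> exists N, forall n, (N <= n)%nat -> d (descent_seq n) l < eps) ->
  forall n, descends (descent_seq n) l.
Proof.
  intros Hl n; apply Rnot_lt_le; intros Hgap.
  set (u := descent_seq n) in *.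
  set (gap := G l + s * d u l - G u).
  destruct (G_lsc l (G l - gap / 2)) as [delta [Hdelta Hnear]]; [unfold gap; lra|].
  destruct (Hl (Rmin delta (gap / (2 * s)))) as [N HN].
  { apply Rmin_glb_lt; auto; apply Rdiv_lt_0_compat; unfold gap; lra. }
  set (p := Nat.max N n); specialize (HN p (Nat.le_max_l N n)).
  assert (Hpl : d (descent_seq p) l < delta) by (pose proof (Rmin_l delta (gap / (2 * s))); lra).
  assert (Hpl' : s * d (descent_seq p) l < gap / 2).
  { pose proof (Rmin_r delta (gap / (2 * s))).
    replace (gap / 2) with (s * (gap / (2 * s))) by (field; lra).
    apply Rmult_lt_compat_l; lra. }
  rewrite (dist_sym X d Hmet) in Hpl; specialize (Hnear _ Hpl).
  pose proof (descent_seq_descends n p (Nat.le_max_r N n)) as Hup; fold u in Hup.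
  unfold descends in Hup.
  pose proof (Rmult_le_compat_l s _ _ (Rlt_le _ _ s_pos)
    (dist_triangle X d Hmet u (descent_seq p) l)).
  unfold gap in *; lra.
Qed.

Lemma descent_seq_limit_minimal l :
  (forall n, descends (descent_seq n) l) -> forall y, descends l y -> y = l.
Proof.
  intros Hl y Hy.
  assert (HG : G l <= G y).
  { apply Rnot_lt_le; intros Hlt.
    destruct (inv_INR_S_small (G l - G y)) as [N HN]; [lra|].
    pose proof (proj2 (descent_step_spec N _) y (descends_trans _ _ _ (Hl N) Hy)).
    pose proof (descends_le _ _ (Hl (S N))); cbn [descent_seq] in *; lra. }
  symmetry; apply (dist_scaled_le0 X d Hmet s); auto; unfold descends in Hy; lra.
Qed.

Theorem ekeland_variational_principle :
  exists l, G l + s * d x0 l <= G x0 /\ forall y, G y + s * d l y <= G l -> y = l.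
Proof.
  destruct (Hcomp descent_seq descent_seq_cauchy) as [l Hl].
  exists l; split.
  - apply (descent_seq_limit l Hl 0%nat).
  - apply descent_seq_limit_minimal, descent_seq_limit, Hl.
Qed.

End Ekeland.

Section ErrorBound.
Variables (X : Type) (d : X -> X -> R).
Hypothesis Hmet : is_metric X d.
Hypothesis Hcomp : complete_metric X d.
Variables (g : X -> Rbar) (a c k : R).
Hypothesis Hac : a < c.
Hypothesis Hk : 0 < k.
Hypothesis g_not_m_infty : forall x, g x <> m_infty.
Hypothesis g_lsc_below : forall x (b : R), b <= c -> Rbar_lt (Finite b) (g x) ->
  exists delta, 0 < delta /\ forall y, d x y < delta -> Rbar_lt (Finite b) (g y).
Hypothesis g_slope : forall x t, g x = Finite t -> a < t <= c ->
  Rbar_le (Finite (/ k)) (strong_slope X d g x).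

(* Ekeland's principle needs a real-valued, bounded below, lower semicontinuous
   function; truncating [g] to the window [a, c] provides one. *)
Definition clamp (y : X) : R :=
  match g y with Finite t => Rmin c (Rmax a t) | p_infty => c | m_infty => a end.

Lemma clamp_ge y : a <= clamp y.
Proof.
  unfold clamp; destruct (g y); try lra.
  apply Rmin_glb; [lra | apply Rmax_l].
Qed.

Lemma clamp_le y : clamp y <= c.
Proof. unfold clamp; destruct (g y); try lra; apply Rmin_l. Qed.

Lemma clamp_gt_floor y t : g y = Finite t -> a < clamp y -> a < t /\ clamp y <= t.
Proof.
  unfold clamp; intros -> H.
  destruct (Rle_or_lt t a) as [Hta | Hta].
  - rewrite Rmax_left in H by lra; pose proof (Rmin_r c a); lra.
  - rewrite Rmax_right in * by lra; split; [lra | apply Rmin_r].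
Qed.

Lemma clamp_le_floor y : clamp y <= a -> Rbar_le (g y) (Finite a).
Proof.
  unfold clamp; destruct (g y) as [t| |]; simpl; intros H; try lra.
  apply Rnot_lt_le; intros Hat.
  assert (a < Rmin c (Rmax a t)) by (apply Rmin_glb_lt; [lra | rewrite Rmax_right; lra]); lra.
Qed.

Lemma clamp_lsc x (b : R) : b < clamp x ->
  exists delta, 0 < delta /\ forall y, d x y < delta -> b < clamp y.
Proof.
  intros Hb; destruct (Rlt_or_le b a) as [Hba | Hab].
  { exists 1; split; [lra|]; intros y _; pose proof (clamp_ge y); lra. }
  assert (Hbc : b < c) by (pose proof (clamp_le x); lra).
  assert (Hbg : Rbar_lt (Finite b) (g x)).
  { pose proof (clamp_gt_floor x) as Hfl; unfold clamp in *.
    destruct (g x) as [t| |]; simpl; auto; try lra.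
    destruct (Hfl t eq_refl); lra. }
  destruct (g_lsc_below x b (Rlt_le _ _ Hbc) Hbg) as [delta [Hdelta Hnear]].
  exists delta; split; auto; intros y Hy; specialize (Hnear y Hy).
  unfold clamp; destruct (g y) as [t| |]; simpl in Hnear; try contradiction; auto.
  apply Rmin_glb_lt; auto; pose proof (Rmax_r a t); lra.
Qed.

Lemma clamp_descent (s : R) l t : 0 < s < / k -> g l = Finite t -> a < t <= c -> clamp l = t ->
  exists y, y <> l /\ clamp y + s * d l y <= clamp l.
Proof.
  intros Hs Hgl Ht Hcl.
  destruct (clamp_lsc l a) as [delta [Hdelta Hnear]]; [lra|].
  assert (Hlub : Rbar_lt (Finite s) (Rbar_lub (fun v => v = Finite 0 \/
      exists y, 0 < d l y < delta /\
        v = Rbar_mult (Rbar_pos_diff (g l) (g y)) (Finite (/ d l y))))).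
  { apply (Rbar_lt_le_trans _ (Finite (/ k))); [exact (proj2 Hs)|].
    apply (Rbar_le_trans _ _ _ (g_slope l t Hgl Ht)), Rbar_glb_le.
    exists delta; split; auto. }
  destruct (Rbar_lt_lub _ _ Hlub) as [v [[-> | [y [Hy ->]]] Hv]]; simpl in Hv; [lra|].
  rewrite Hgl in Hv; pose proof (g_not_m_infty y) as Hy'.
  destruct (g y) as [u| |] eqn:Hgy; simpl in Hv; try contradiction; [|lra].
  destruct (clamp_gt_floor y u Hgy (Hnear y (proj2 Hy))) as [Hau Hyu].
  assert (Hdrop : s * d l y < Rmax 0 (t - u)).
  { apply (Rmult_lt_compat_r (d l y)) in Hv; [|lra].
    rewrite Rmult_assoc, Rinv_l, Rmult_1_r in Hv by lra; lra. }
  exists y; split.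
  - intros ->; rewrite (dist_refl X d Hmet) in Hy; lra.
  - assert (0 < s * d l y) by (apply Rmult_lt_0_compat; lra).
    assert (s * d l y < t - u).
    { apply Rnot_le_lt; intros Htu; apply (Rlt_not_le _ _ Hdrop), Rmax_lub; lra. }
    lra.
Qed.

Theorem slope_error_bound x0 e : g x0 = Finite c -> 0 < e ->
  exists z, Rbar_le (g z) (Finite a) /\ d x0 z <= k * (c - a) + e.
Proof.
  intros Hx0 He.
  set (kp := k + e / (c - a)).
  assert (Hkp : k < kp) by (assert (0 < e / (c - a)) by (apply Rdiv_lt_0_compat; lra); unfold kp; lra).
  assert (Hc0 : clamp x0 = c).
  { unfold clamp; rewrite Hx0; apply Rmin_left, Rmax_r. }
  destruct (ekeland_variational_principle X d Hmet Hcomp clamp a (/ kp) clamp_ge clamp_lsc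
              (Rinv_0_lt_compat kp ltac:(lra)) x0) as [l [Hl Hmin]].
  rewrite Hc0 in Hl.
  assert (Hlx0 : c <= clamp l -> l = x0).
  { intros Hcl; symmetry; apply (dist_scaled_le0 X d Hmet (/ kp)); [apply Rinv_0_lt_compat|]; lra. }
  assert (Hfloor : clamp l <= a).
  { apply Rnot_lt_le; intros Hcl.
    assert (Hval : exists t, g l = Finite t /\ a < t <= c /\ clamp l = t).
    { pose proof (g_not_m_infty l) as Hgl.
      destruct (g l) as [t| |] eqn:Hgl'; try contradiction.
      - destruct (clamp_gt_floor l t Hgl' Hcl) as [Hat Hlt].
        destruct (Rle_or_lt t c) as [Htc | Htc].
        + exists t; repeat split; auto; unfold clamp; rewrite Hgl'.
          rewrite Rmax_right, Rmin_right; lra.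
        + assert (clamp l = c) by (unfold clamp; rewrite Hgl', Rmax_right, Rmin_left; lra).
          rewrite (Hlx0 ltac:(lra)), Hx0 in Hgl'; injection Hgl'; lra.
      - rewrite (Hlx0 ltac:(unfold clamp; rewrite Hgl'; lra)), Hx0 in Hgl'; discriminate. }
    destruct Hval as [t [Hgl [Ht Hclt]]].
    assert (Hs : 0 < / kp < / k).
    { split; [apply Rinv_0_lt_compat | apply Rinv_lt_contravar; [apply Rmult_lt_0_compat|]]; lra. }
    destruct (clamp_descent (/ kp) l t Hs Hgl Ht Hclt) as [y [Hyl Hy]].
    exact (Hyl (Hmin y Hy)). }
  exists l; split; [apply clamp_le_floor, Hfloor|].
  pose proof (clamp_ge l).
  replace (k * (c - a) + e) with (kp * (c - a)) by (unfold kp; field; lra).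
  replace (d x0 l) with (kp * (/ kp * d x0 l)) by (field; lra).
  apply Rmult_le_compat_l; lra.
Qed.

End ErrorBound.

Section ClassK.
Variables (r0 : R) (phi : R -> R).
Hypothesis HK : in_K r0 phi.

Lemma phi_0 : phi 0 = 0.
Proof. apply (proj2 (proj2 HK)). Qed.

Lemma in_K_lt_pos s t : 0 < s < t -> t < r0 -> phi s < phi t.
Proof.
  destruct HK as [_ [[phi' [Hd [_ Hpos]]] _]]; intros Hst Ht.
  destruct (MVT_gen phi s t phi') as [c [Hc Heq]];
    rewrite ?Rmin_left, ?Rmax_right in * by lra.
  - intros x Hx; apply Hd; lra.
  - intros x Hx; apply continuity_pt_filterlim, (@ex_derive_continuous R_AbsRing R_NormedModule).
    exists (phi' x); apply Hd; lra.
  - pose proof (Rmult_lt_0_compat (phi' c) (t - s) ltac:(apply Hpos; lra) ltac:(lra)); lra.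
Qed.

(* At [s = 0] only the right continuity of [phi] at [0] is available. *)
Lemma in_K_lt s t : 0 <= s < t -> t < r0 -> phi s < phi t.
Proof.
  intros Hst Ht; destruct (Req_dec s 0) as [-> | Hs]; [|apply in_K_lt_pos; lra].
  assert (Hmid : phi (t / 2) < phi t) by (apply in_K_lt_pos; lra).
  apply (Rle_lt_trans _ (phi (t / 2))); auto; apply Rnot_lt_le; intros Hlt.
  destruct HK as [Hcont _].
  destruct (Hcont 0 ltac:(lra) (phi 0 - phi (t / 2))) as [delta [Hdelta Hnear]]; [lra|].
  set (v := Rmin (delta / 2) (t / 4)).
  assert (Hv : 0 < v <= t / 4 /\ v <= delta / 2).
  { unfold v; split; [split; [apply Rmin_glb_lt | apply Rmin_r]; lra | apply Rmin_l]. }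
  assert (Hv0 : Rabs (phi v - phi 0) < phi 0 - phi (t / 2)).
  { apply Hnear; [lra|]; rewrite Rminus_0_r, Rabs_right; lra. }
  assert (phi v < phi (t / 2)) by (apply in_K_lt_pos; lra).
  apply Rabs_def2 in Hv0; lra.
Qed.

Lemma in_K_le s t : 0 <= s <= t -> t < r0 -> phi s <= phi t.
Proof.
  intros Hst Ht; destruct (Req_dec s t) as [-> | Hne]; [lra|].
  left; apply in_K_lt; lra.
Qed.

Lemma in_K_pos t : 0 < t < r0 -> 0 < phi t.
Proof.
  intros Ht; rewrite <- phi_0; apply in_K_lt; lra.
Qed.

Lemma in_K_left_cont t (b : R) : 0 < t < r0 -> b < phi t -> exists u, 0 < u < t /\ b < phi u.
Proof.
  intros Ht Hb; destruct HK as [Hcont _].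
  destruct (Hcont t ltac:(lra) (phi t - b)) as [delta [Hdelta Hnear]]; [lra|].
  set (u := Rmax (t - delta / 2) (t / 2)).
  assert (Hu : t - delta / 2 <= u /\ t / 2 <= u /\ u < t).
  { unfold u; repeat split; [apply Rmax_l | apply Rmax_r | apply Rmax_lub_lt; lra]. }
  exists u; split; [lra|].
  assert (Hphi : Rabs (phi u - phi t) < phi t - b).
  { apply Hnear; [lra|]; rewrite Rabs_left; lra. }
  apply Rabs_def2 in Hphi; lra.
Qed.

Lemma in_K_lt_left_limit (L : Rbar) t :
  left_limit_at phi r0 L -> 0 <= t < r0 -> Rbar_lt (Finite (phi t)) L.
Proof.
  intros Hlim Ht; apply Rbar_not_le_lt; intros HL.
  set (t' := (t + r0) / 2).
  assert (Htt' : phi t < phi t') by (apply in_K_lt; unfold t'; lra).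
  assert (Hnear : at_left r0 (fun v => Rbar_lt (Finite (phi v)) (Finite (phi t')))).
  { apply (Hlim (fun u => Rbar_lt u (Finite (phi t')))), open_Rbar_lt'.
    apply (Rbar_le_lt_trans _ _ _ HL); exact Htt'. }
  assert (Hright : at_left r0 (fun v => t' < v < r0)).
  { exists (mkposreal (r0 - t') ltac:(unfold t'; lra)); simpl; intros v Hv Hvr.
    unfold ball in Hv; simpl in Hv; unfold AbsRing_ball, abs, minus, plus, opp in Hv; simpl in Hv.
    apply Rabs_def2 in Hv; lra. }
  destruct (filter_ex _ (filter_and _ _ Hnear Hright)) as [v [Hv Hvt]]; simpl in Hv.
  assert (phi t' < phi v) by (apply in_K_lt; unfold t' in *; lra); lra.
Qed.

End ClassK.

Section PhiComp.
Variables (X : Type) (d : X -> X -> R) (f : X -> Rbar) (r0 : R) (phi : R -> R).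
Hypothesis Hf : no_minus_infty X f.
Hypothesis Hlsc : lsc X d f.
Hypothesis HK : in_K r0 phi.

Local Notation g := (phi_comp phi r0 f).

Lemma phi_comp_Finite x w : f x = Finite w -> 0 <= w < r0 -> g x = Finite (phi w).
Proof.
  intros Hx Hw; unfold phi_comp; rewrite Hx.
  destruct (Rlt_dec w 0); [lra|]; destruct (Rlt_dec w r0); [reflexivity | lra].
Qed.

Lemma phi_comp_not_m_infty x : g x <> m_infty.
Proof.
  unfold phi_comp; pose proof (Hf x); destruct (f x) as [w| |]; try congruence.
  destruct (Rlt_dec w 0); [|destruct (Rlt_dec w r0)]; discriminate.
Qed.

Lemma phi_comp_le_phi z u : 0 <= u < r0 ->
  (Rbar_le (g z) (Finite (phi u)) <-> Rbar_le (f z) (Finite u)).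
Proof.
  intros Hu; unfold phi_comp; destruct (f z) as [w| |]; simpl; try tauto.
  destruct (Rlt_dec w 0); [|destruct (Rlt_dec w r0)]; simpl; split; intros H; try lra.
  - pose proof (in_K_le r0 phi HK 0 u ltac:(lra) ltac:(lra)); rewrite (phi_0 r0 phi HK) in *; lra.
  - apply Rnot_lt_le; intros Huw; pose proof (in_K_lt r0 phi HK u w ltac:(lra) ltac:(lra)); lra.
  - apply (in_K_le r0); auto; lra.
Qed.

Lemma phi_comp_pos x t : g x = Finite t -> 0 < t ->
  exists w, f x = Finite w /\ 0 < w < r0 /\ t = phi w.
Proof.
  unfold phi_comp; destruct (f x) as [w| |]; intros H Ht; try discriminate.
  destruct (Rlt_dec w 0); [injection H; lra|].
  destruct (Rlt_dec w r0); [injection H; intros <- | discriminate].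
  exists w; repeat split; auto; try lra.
  destruct (Req_dec w 0) as [-> | ]; [rewrite (phi_0 r0 phi HK) in Ht|]; lra.
Qed.

Lemma phi_comp_gt_of_f_gt y w : 0 <= w < r0 -> Rbar_lt (Finite w) (f y) ->
  Rbar_lt (Finite (phi w)) (g y).
Proof.
  intros Hw; unfold phi_comp; destruct (f y) as [v| |]; simpl; intros H; auto; try contradiction.
  destruct (Rlt_dec v 0); [lra|]; destruct (Rlt_dec v r0); simpl; auto.
  apply (in_K_lt r0); auto; lra.
Qed.

Lemma phi_comp_gt_neg_iff y (b : R) : b < 0 ->
  (Rbar_lt (Finite b) (g y) <-> Rbar_lt (Finite b) (f y)).
Proof.
  intros Hb; unfold phi_comp; pose proof (Hf y).
  destruct (f y) as [v| |]; simpl; try tauto.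
  destruct (Rlt_dec v 0); [|destruct (Rlt_dec v r0)]; simpl; try tauto.
  - pose proof (in_K_le r0 phi HK 0 v ltac:(lra) ltac:(lra)).
    rewrite (phi_0 r0 phi HK) in *; split; lra.
  - split; intros; [lra | exact I].
Qed.

Lemma phi_comp_gt_level x u (b : R) : 0 <= u < r0 -> 0 <= b <= phi u ->
  Rbar_lt (Finite b) (g x) ->
  exists w, 0 <= w < r0 /\ b <= phi w /\ Rbar_lt (Finite w) (f x).
Proof.
  intros Hu Hb; unfold phi_comp; destruct (f x) as [v| |]; intros H; [| | contradiction].
  2: exists u; simpl; repeat split; lra.
  destruct (Rlt_dec v 0); [simpl in H; lra|].
  destruct (Rlt_dec v r0); [|exists u; simpl; repeat split; lra].
  simpl in H; destruct (Req_dec v 0) as [-> | Hv]; [rewrite (phi_0 r0 phi HK) in H; lra|].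
  destruct (in_K_left_cont r0 phi HK v b ltac:(lra) H) as [w [Hw Hbw]].
  exists w; simpl; repeat split; lra.
Qed.

Lemma phi_comp_lsc_below u : 0 <= u < r0 -> forall x (b : R), b <= phi u ->
  Rbar_lt (Finite b) (g x) ->
  exists delta, 0 < delta /\ forall y, d x y < delta -> Rbar_lt (Finite b) (g y).
Proof.
  intros Hu x b Hbu Hbx; destruct (Rlt_or_le b 0) as [Hb | Hb].
  - apply (phi_comp_gt_neg_iff x b Hb) in Hbx.
    destruct (Hlsc x b Hbx) as [delta [Hdelta Hnear]].
    exists delta; split; auto; intros y Hy; apply phi_comp_gt_neg_iff, Hnear; auto.
  - destruct (phi_comp_gt_level x u b Hu (conj Hb Hbu) Hbx) as [w [Hw [Hbw Hwx]]].
    destruct (Hlsc x w Hwx) as [delta [Hdelta Hnear]].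
    exists delta; split; auto; intros y Hy.
    apply (Rbar_le_lt_trans _ (Finite (phi w))); [exact Hbw|].
    apply phi_comp_gt_of_f_gt, Hnear; auto.
Qed.

End PhiComp.

Section Equivalence.
Variables (X : Type) (d : X -> X -> R) (f : X -> Rbar) (r0 k : R) (phi : R -> R).
Hypothesis Hmet : is_metric X d.
Hypothesis Hcomp : complete_metric X d.
Hypothesis Hf : no_minus_infty X f.
Hypothesis Hlsc : lsc X d f.
Hypothesis HK : in_K r0 phi.
Hypothesis Hk : 0 < k.

Local Notation g := (phi_comp phi r0 f).

Definition slope_bound : Prop :=
  forall x, Rbar_lt (Finite 0) (f x) -> Rbar_lt (f x) (Finite r0) ->
    Rbar_le (Finite (/ k)) (strong_slope X d g x).

Definition sublevel_Lipschitz : Prop :=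
  forall r1 r2, 0 < r1 < r0 -> 0 < r2 < r0 ->
    Rbar_le (HausDist X d (sublevel f r1) (sublevel f r2)) (Finite (k * Rabs (phi r1 - phi r2))).

Lemma slope_bound_of_metric_regular (phir0 : Rbar) :
  left_limit_at phi r0 phir0 ->
  metric_regular_on X d (epi_map phi r0 f) k
    (fun x y => Rbar_lt (Finite 0) (f x) /\ Rbar_lt (f x) (Finite r0) /\
                0 < y /\ Rbar_lt (Finite y) phir0) ->
  slope_bound.
Proof.
  intros Hlim Hreg x H0 H1.
  destruct (f x) as [r| |] eqn:Hx; simpl in H0, H1; try contradiction.
  assert (Hgx : g x = Finite (phi r)) by (apply phi_comp_Finite; auto; lra).
  destruct (Hreg x (phi r)) as [eps [delta [Heps [Hdelta Hnear]]]].
  - unfold epi_map; rewrite Hgx; simpl; lra.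
  - rewrite Hx; repeat split; auto; [apply (in_K_pos r0) | apply (in_K_lt_left_limit r0)]; auto; lra.
  - apply (strong_slope_ge_of_descent X d Hmet g x (phi r) k Hk Hgx
             (phi_comp_not_m_infty X f r0 phi Hf)).
    intros eta Heta; set (D := Rmin (eta / 2) (delta / 2)).
    assert (HD : 0 < D <= eta / 2 /\ D <= delta / 2).
    { unfold D; split; [split; [apply Rmin_glb_lt | apply Rmin_l] | apply Rmin_r]; lra. }
    exists D; split; [lra|]; intros e He.
    assert (Hdist : Rbar_le (distR (phi r - D) (epi_map phi r0 f x)) (Finite D)).
    { apply (Rbar_le_trans _ (Finite (Rabs (phi r - D - phi r)))).
      - apply Rbar_glb_le; exists (phi r); split; auto; unfold epi_map; rewrite Hgx; simpl; lra.
      - simpl; rewrite Rabs_left; lra. }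
    assert (Hreg' := Hnear x (phi r - D) ltac:(rewrite (dist_refl X d Hmet); lra)
                       ltac:(rewrite Rabs_left; lra)).
    destruct (distX_lt X d x (fun z => epi_map phi r0 f z (phi r - D)) (k * D + e))
      as [z [Hz Hdz]].
    { apply (Rbar_le_lt_trans _ _ _ Hreg'), (Rbar_le_lt_trans _ _ _
        (Rbar_mult_le_compat_l k _ _ Hk Hdist)); simpl; lra. }
    exists z; split; auto.
Qed.

Lemma slope_bound_of_sublevel_Lipschitz : sublevel_Lipschitz -> slope_bound.
Proof.
  intros Hii x H0 H1.
  destruct (f x) as [r| |] eqn:Hx; simpl in H0, H1; try contradiction.
  apply (strong_slope_ge_of_descent X d Hmet g x (phi r) k Hk
           ltac:(apply phi_comp_Finite; auto; lra) (phi_comp_not_m_infty X f r0 phi Hf)).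
  intros eta Heta.
  destruct (in_K_left_cont r0 phi HK r (phi r - eta) ltac:(lra) ltac:(lra)) as [u [Hu Hphiu]].
  assert (Hur : phi u < phi r) by (apply (in_K_lt r0); auto; lra).
  exists (phi r - phi u); split; [lra|]; intros e He.
  assert (Hdist := Rbar_le_trans _ _ _
    (distX_le_HausDist X d (sublevel f r) (sublevel f u) x ltac:(unfold sublevel; rewrite Hx; simpl; lra))
    (Hii r u ltac:(lra) ltac:(lra))).
  rewrite Rabs_right in Hdist by lra.
  destruct (distX_lt X d x (sublevel f u) (k * (phi r - phi u) + e)) as [z [Hz Hdz]].
  { apply (Rbar_le_lt_trans _ _ _ Hdist); simpl; lra. }
  exists z; split; auto.
  replace (phi r - (phi r - phi u)) with (phi u) by ring.
  apply phi_comp_le_phi; auto; lra.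
Qed.

Section FromSlope.
Hypothesis Hslope : slope_bound.

Lemma phi_comp_error_bound x0 a c e : g x0 = Finite c -> 0 <= a < c -> 0 < e ->
  exists z, Rbar_le (g z) (Finite a) /\ d x0 z <= k * (c - a) + e.
Proof.
  intros Hx0 Ha He.
  destruct (phi_comp_pos X f r0 phi HK x0 c Hx0 ltac:(lra)) as [u [Hfu [Hu ->]]].
  apply (slope_error_bound X d Hmet Hcomp g a (phi u) k); auto; try lra.
  - apply phi_comp_not_m_infty; auto.
  - apply (phi_comp_lsc_below X d f r0 phi Hf Hlsc HK u); lra.
  - intros x t Hgx Ht.
    destruct (phi_comp_pos X f r0 phi HK x t Hgx ltac:(lra)) as [w [Hfw [Hw _]]].
    apply Hslope; rewrite Hfw; simpl; lra.
Qed.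

Lemma distX_sublevel_le x c a : g x = Finite c -> 0 <= a < c ->
  Rbar_le (distX X d x (fun z => Rbar_le (g z) (Finite a))) (Finite (k * (c - a))).
Proof.
  intros Hx Ha; apply distX_le_approx; intros e He.
  destruct (phi_comp_error_bound x a c e Hx Ha He) as [z Hz]; exists z; auto.
Qed.

Lemma sublevel_Lipschitz_of_slope_bound : sublevel_Lipschitz.
Proof.
  assert (Hone : forall s t x, 0 < s < r0 -> 0 < t < r0 -> sublevel f s x ->
            Rbar_le (distX X d x (sublevel f t)) (Finite (k * Rabs (phi s - phi t)))).
  { intros s t x Hs Ht Hx.
    assert (Hnn : 0 <= k * Rabs (phi s - phi t)) by (apply Rmult_le_pos; [lra | apply Rabs_pos]).
    destruct (Rbar_le_lt_dec (f x) (Finite t)) as [Hxt | Hxt].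
    { apply (Rbar_le_trans _ _ _ (distX_mem X d Hmet x _ Hxt)); exact Hnn. }
    unfold sublevel in Hx; destruct (f x) as [u| |] eqn:Hfx; simpl in Hx, Hxt; try contradiction.
    assert (Hgx : g x = Finite (phi u)) by (apply phi_comp_Finite; auto; lra).
    assert (Htu : phi t < phi u) by (apply (in_K_lt r0); auto; lra).
    assert (Hus : phi u <= phi s) by (apply (in_K_le r0); auto; lra).
    apply (Rbar_le_trans _ _ _ (distX_subset X d x _ _
             (fun z Hz => proj1 (phi_comp_le_phi X f r0 phi HK z t ltac:(lra)) Hz))).
    apply (Rbar_le_trans _ _ _ (distX_sublevel_le x _ _ Hgx
             (conj (Rlt_le _ _ (in_K_pos r0 phi HK t Ht)) Htu))).
    simpl; apply Rmult_le_compat_l; [lra|]; rewrite Rabs_right; lra. }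
  intros r1 r2 H1 H2; apply Rbar_lub_le; intros v [-> | ->];
    apply Rbar_lub_le; intros w [x [Hx ->]].
  - apply Hone; auto.
  - rewrite Rabs_minus_sym; apply Hone; auto.
Qed.

Lemma metric_regular_of_slope_bound xb yb : 0 < yb ->
  metric_regular_at X d (epi_map phi r0 f) k xb yb.
Proof.
  intros Hyb; exists 1, (yb / 2); split; [lra|]; split; [lra|].
  intros x y _ Hy; apply Rabs_def2 in Hy; unfold epi_map.
  assert (Hdist_ge : forall c, c <= y ->
            Rbar_le (Finite 0) (Rbar_mult (Finite k) (distR y (fun t => Rbar_le c (Finite t))))).
  { intros c _; apply (Rbar_le_trans _ (Rbar_mult (Finite k) (Finite 0))); [simpl; lra|].
    apply Rbar_mult_le_compat_l; auto; apply Rbar_le_glb; intros v [z [_ ->]]; apply Rabs_pos. }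
  pose proof (phi_comp_not_m_infty X f r0 phi Hf x) as Hgx'.
  destruct (g x) as [c| |] eqn:Hgx; try contradiction.
  - destruct (Rle_or_lt c y) as [Hcy | Hcy].
    + apply (Rbar_le_trans _ (Finite 0)); [apply (distX_mem X d Hmet); rewrite Hgx; exact Hcy|].
      apply Hdist_ge; simpl; exact Hcy.
    + apply (Rbar_le_trans _ _ _ (distX_sublevel_le x c y Hgx ltac:(lra))).
      apply (Rbar_le_trans _ (Rbar_mult (Finite k) (Finite (c - y)))); [apply Rbar_le_refl|].
      apply Rbar_mult_le_compat_l; auto; apply Rbar_le_glb; intros v [z [Hz ->]].
      simpl in Hz |- *; rewrite Rabs_left1; lra.
  - assert (Hempty : distR y (fun t => Rbar_le p_infty (Finite t)) = p_infty).
    { apply Rbar_le_antisym; [destruct (distR _ _); simpl; auto|].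
      apply Rbar_le_glb; intros v [z [Hz _]]; contradiction. }
    rewrite Hempty, Rbar_mult_pos_p_infty by exact Hk; destruct (distX _ _ _ _); simpl; auto.
Qed.

End FromSlope.
End Equivalence.

Theorem corollary2p4 (X : Type) (d : X -> X -> R)
  (Hmet : is_metric X d) (Hcomp : complete_metric X d)
  (f : X -> Rbar) (Hf : no_minus_infty X f) (Hlsc : lsc X d f)
  (r0 k : R) (Hr0 : 0 < r0) (Hk : 0 < k)
  (phi : R -> R) (HK : in_K r0 phi)
  (phir0 : Rbar) (Hphir0 : left_limit_at phi r0 phir0) :
  let V := fun x y => Rbar_lt (Finite 0) (f x) /\ Rbar_lt (f x) (Finite r0) /\
                      0 < y /\ Rbar_lt (Finite y) phir0 in
  ((metric_regular_on X d (epi_map phi r0 f) k V)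
    <-> (forall r1 r2, 0 < r1 < r0 -> 0 < r2 < r0 ->
           Rbar_le (HausDist X d (sublevel f r1) (sublevel f r2))
                   (Finite (k * Rabs (phi r1 - phi r2))))) /\
  ((forall r1 r2, 0 < r1 < r0 -> 0 < r2 < r0 ->
           Rbar_le (HausDist X d (sublevel f r1) (sublevel f r2))
                   (Finite (k * Rabs (phi r1 - phi r2))))
    <-> (forall x, Rbar_lt (Finite 0) (f x) -> Rbar_lt (f x) (Finite r0) ->
           Rbar_le (Finite (/ k)) (strong_slope X d (phi_comp phi r0 f) x))).
Proof.
  intros V.
  pose proof (slope_bound_of_metric_regular X d f r0 k phi Hmet Hf HK Hk phir0 Hphir0) as Hi_iii.
  pose proof (slope_bound_of_sublevel_Lipschitz X d f r0 k phi Hmet Hf HK Hk) as Hii_iii.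
  pose proof (sublevel_Lipschitz_of_slope_bound X d f r0 k phi Hmet Hcomp Hf Hlsc HK Hk)
    as Hiii_ii.
  assert (Hiii_i : slope_bound X d f r0 k phi -> metric_regular_on X d (epi_map phi r0 f) k V).
  { intros Hslope x y _ [_ [_ [Hy _]]].
    exact (metric_regular_of_slope_bound X d f r0 k phi Hmet Hcomp Hf Hlsc HK Hk Hslope x y Hy). }
  split; split; intros H.
  - exact (Hiii_ii (Hi_iii H)).
  - exact (Hiii_i (Hii_iii H)).
  - exact (Hii_iii H).
  - exact (Hiii_ii H).
Qed.
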